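(* Consider the instance with $\bar v=1$, $\rho=1/2$, $v_t=1$ for all $t\in[T]$, and $G$ the uniform distribution on $\{1/3,2/3\}$. For any online throttling strategy $\beta$ and any realization $\bm p\in\{1/3,2/3\}^T$, letting $S$ be the number of entries of $\bm p$ equal to $1/3$, the total revenue satisfies \[R^\beta(\bm p)\le\begin{cases}\frac13(S+T), & S\ge T/2,\\[2pt] \frac23 S+\frac13\left\lfloor\frac{3T-2S}{4}\right\rfloor, & S<T/2.\end{cases}\]
   Context: A buyer participates in $T$ repeated second-price auctions with budget $B=\rho T$. In round $t$ she has value $v_t$ and the highest competing bid is $p_t$; she chooses $x_t\in\{0,1\}$, receiving revenue $x_t(v_t-p_t)^+$ and paying $x_tp_t\mathbf 1[v_t\ge p_t]$. An online throttling strategy chooses $x_t$ based on past observations, $v_t$ and internal randomness, and its total payment must not exceed $B$. $R^\beta(\bm p)$ denotes the total revenue $\sum_tx_t(v_t-p_t)^+$ (values being fixed at $1$). *)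

From mathcomp Require Import all_boot all_order all_algebra.
From mathcomp Require Import reals.
Set Implicit Arguments. Unset Strict Implicit. Unset Printing Implicit Defensive.
Import Order.TTheory GRing.Theory Num.Theory.
Local Open Scope ring_scope.

(* A (possibly randomized) throttling strategy: given internal randomness
   w : Omega, value sequence v and competing-bid sequence p, it returns the
   decision x_t = beta w v p t (true = participate). *)
Definition strategy (R : realType) (Omega : Type) :=
  Omega -> (nat -> R) -> (nat -> R) -> nat -> bool.

(* Online: x_t depends only on w, v_1..v_t and p_1..p_{t-1}
   (rounds indexed 0..T-1 here). *)
Definition online (R : realType) (Omega : Type) (beta : strategy R Omega) :=
  forall w (v v' p p' : nat -> R) (t : nat),
    (forall s, (s <= t)%N -> v s = v' s) ->
    (forall s, (s < t)%N -> p s = p' s) ->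
    beta w v p t = beta w v' p' t.

Definition payment (R : realType) (Omega : Type) (beta : strategy R Omega)
  (T : nat) (w : Omega) (v p : nat -> R) : R :=
  \sum_(t < T) ((beta w v p t)%:R * p t * (if p t <= v t then 1 else 0)).

Definition revenue (R : realType) (Omega : Type) (beta : strategy R Omega)
  (T : nat) (w : Omega) (v p : nat -> R) : R :=
  \sum_(t < T) ((beta w v p t)%:R * Num.max (v t - p t) 0).

(* Budget feasibility on the instance: values all 1, prices in the support
   {1/3, 2/3} of G, budget B = rho * T; must hold for every realization of
   prices and of the internal randomness. *)
Definition budget_feasible (R : realType) (Omega : Type) (beta : strategy R Omega)
  (T : nat) (rho : R) :=
  forall w (p : nat -> R),
    (forall t, (t < T)%N -> p t = 1/3 \/ p t = 2/3) ->
    payment beta T w (fun=> 1) p <= rho * T%:R.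

(* Only the two prices matter: the revenue (2A + B)/3 and the payment
   (A + 2B)/3 of any decision sequence are determined by the numbers A and B
   of rounds won at price 1/3 and at price 2/3.  Since A <= S and A + B <= T,
   2A + B <= S + T; and the budget gives 2A + 4B <= 3T, whence
   4(2A + B - 2S) <= 3T + 6A - 8S <= 3T - 2S, and integrality of 2A + B - 2S
   yields the floor. *)
From mathcomp Require Import all_boot all_order all_algebra.
From mathcomp Require Import reals.
From mathcomp Require Import zify lra.
Import Order.TTheory GRing.Theory Num.Theory.
Local Open Scope ring_scope.

Lemma natr_card_set (R : pzSemiRingType) (T : nat) (P : pred 'I_T) :
  #|[set t | P t]|%:R = \sum_(t < T) (P t)%:R :> R.
Proof.
rewrite -sum1_card natr_sum big_mkcond /=.
by apply: eq_bigr => t _; rewrite inE; case: (P t).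
Qed.

Lemma sum_two_valued {R : pzRingType} {T : nat} (f : R -> R)
    (x : nat -> bool) {p : nat -> R} {a b : R} :
    a != b -> (forall t, (t < T)%N -> p t = a \/ p t = b) ->
  \sum_(t < T) (x t)%:R * f (p t) =
    #|[set t : 'I_T | x t && (p t == a)]|%:R * f a
    + #|[set t : 'I_T | x t && (p t == b)]|%:R * f b.
Proof.
move=> neq_ab hp; rewrite !natr_card_set !mulr_suml -big_split /=.
apply: eq_bigr => t _; case: (hp t (ltn_ord t)) => ->.
  by rewrite eqxx (negbTE neq_ab) andbT andbF mulr0n mul0r addr0.
by rewrite eqxx eq_sym (negbTE neq_ab) andbT andbF mulr0n mul0r add0r.
Qed.

Lemma card_set_and_le (T : finType) (P Q : pred T) :
  (#|[set t | P t && Q t]| <= #|[set t | Q t]|)%N.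
Proof. by apply/subset_leq_card/subsetP => t; rewrite !inE => /andP[]. Qed.

Lemma card_set_disjoint_le (T : finType) (P Q : pred T) :
    (forall t, ~~ (P t && Q t)) ->
  (#|[set t | P t]| + #|[set t | Q t]| <= #|T|)%N.
Proof.
move=> disjPQ; rewrite -cardsUI.
have -> : [set t | P t] :&: [set t | Q t] = set0.
  by apply/setP => t; rewrite !inE (negbTE (disjPQ t)).
by rewrite cards0 addn0 max_card.
Qed.

Section TwoPriceCounts.

Variable R : archiRealFieldType.
Variables T S A B : nat.
Hypothesis A_le_S : (A <= S)%N.
Hypothesis AB_le_T : (A + B <= T)%N.
Hypothesis budget : (2 * A + 4 * B <= 3 * T)%N.

Lemma two_price_revenue_le_addST : (2 * A + B)%:R / 3 <= (S + T)%:R / 3 :> R.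
Proof. by rewrite ler_pM2r ?invr_gt0 ?ltr0n // ler_nat; lia. Qed.

Lemma two_price_revenue_le_floor :
  (2 * A + B)%:R / 3 <=
    2/3 * S%:R + 1/3 * (Num.floor ((3 * T%:R - 2 * S%:R) / 4 : R))%:~R :> R.
Proof.
have hA : A%:R <= S%:R :> R by rewrite ler_nat.
have hbudget : 2 * A%:R + 4 * B%:R <= 3 * T%:R :> R.
  by move: budget; rewrite -(ler_nat R) !natrD; lra.
have excess_le_floor :
    (2 * A + B)%:Z - (2 * S)%:Z <= Num.floor ((3 * T%:R - 2 * S%:R) / 4 : R).
  by rewrite floor_ge_int intrB -!pmulrn !natrD; lra.
move: excess_le_floor; rewrite -(ler_int R) intrB -!pmulrn !natrD; lra.
Qed.

End TwoPriceCounts.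

Theorem lemma6 (R : realType) (Omega : Type) (T : nat)
  (beta : strategy R Omega) (h_online : online beta)
  (h_budget : budget_feasible beta T (1/2))
  (p : nat -> R) (hp : forall t, (t < T)%N -> p t = 1/3 \/ p t = 2/3)
  (w : Omega) :
  let S := #|[set t : 'I_T | p t == 1/3]| in
  revenue beta T w (fun=> 1) p <=
    (if (T <= 2 * S)%N then (S + T)%:R / 3
     else 2/3 * S%:R + 1/3 * (Num.floor ((3 * T%:R - 2 * S%:R) / 4 : R))%:~R).
Proof.
cbv zeta; set S := #|[set t : 'I_T | p t == 1/3]|.
set x := beta w (fun=> 1) p.
set A := #|[set t : 'I_T | x t && (p t == 1/3)]|.
set B := #|[set t : 'I_T | x t && (p t == 2/3)]|.
have neq_prices : (1/3 : R) != 2/3 by apply/eqP; lra.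
have revenueE : revenue beta T w (fun=> 1) p = (2 * A + B)%:R / 3.
  rewrite /revenue (sum_two_valued (fun c => Num.max (1 - c) 0) x neq_prices hp).
  rewrite !max_l ?natrD; lra.
have paymentE : payment beta T w (fun=> 1) p = (A + 2 * B)%:R / 3.
  rewrite /payment; under eq_bigr do rewrite -mulrA.
  rewrite (sum_two_valued (fun c => c * (if c <= 1 then 1 else 0)) x neq_prices hp).
  rewrite !ifT ?natrD; lra.
have budget : (2 * A + 4 * B <= 3 * T)%N.
  by have := h_budget w p hp; rewrite paymentE -(ler_nat R) !natrD; lra.
have A_le_S : (A <= S)%N by apply: card_set_and_le.
have AB_le_T : (A + B <= T)%N.
  rewrite -[T]card_ord; apply: card_set_disjoint_le => t.
  by case: (p t =P 1/3) => [->|]; rewrite ?(negbTE neq_prices) ?andbF.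
rewrite revenueE; case: ifP => _.
- exact: two_price_revenue_le_addST.
- exact: two_price_revenue_le_floor.
Qed.
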